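(* Let $L$ spin-orbitals be indexed by $\{1,\dots,L\}$ and $1\le N_{\mathrm{occ}}<L$; o-operators are $\hat a^\dagger_p,\hat a_p$ with $p\le N_{\mathrm{occ}}$, v-operators those with $p>N_{\mathrm{occ}}$. Let $\hat C$ be a chain (product, in a fixed order) of $n\ge1$ excitation operators $\hat E^a_i=\hat a^\dagger_a\hat a_i$ and $n$ deexcitation operators $\hat D^i_a=\hat a^\dagger_i\hat a_a$ ($i\le N_{\mathrm{occ}}<a$), viewed as a chain of $4n$ elementary operators by expanding each (de)excitation operator into its two factors. Let $S=s_1\cdots s_{2n}$ be the word obtained from $\hat C$ by replacing each deexcitation operator by ''('' and each excitation operator by '')'', and suppose $S$ is a Dyck word. For $0\le k\le 2n$ let $d_k$ be the number of ''('' minus the number of '')'' among $s_1,\dots,s_k$, and let $(d^\uparrow_1,\dots,d^\uparrow_n)$ be the list of the values $d_k$ at those positions $k$ with $s_k=$ ''('' (the opening depths). Define $\mathcal W(\hat C)$ as the number of partitions of the $4n$ elementary operators of $\hat C$ into $2n$ pairs such that every pair $(x,y)$, with $x$ to the left of $y$ in the chain, is either an o-creation operator $x$ with an o-annihilation operator $y$, or a v-annihilation operator $x$ with a v-creation operator $y$. Then $$\mathcal W(\hat C)=\Big(\prod_{k=1}^n d^\uparrow_k\Big)^2.$$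
   Context: A Dyck word is a finite word over $\{(,)\}$ with as many opening as closing brackets, every prefix of which contains at least as many opening as closing brackets. Motivation: a partition into pairs is a full contraction in the sense of Wick's theorem relative to the Fermi vacuum (Slater determinant with spin-orbitals $1,\dots,N_{\mathrm{occ}}$ occupied); the pairs allowed in the definition of $\mathcal W$ are exactly those contractions whose Fermi-vacuum value is not forced to vanish by the contraction rules $\langle \hat a^\dagger_r\hat a_s\rangle=\delta_{rs}n_rn_s$, $\langle \hat a_s\hat a^\dagger_r\rangle=\delta_{rs}(1-n_r)(1-n_s)$ (contractions of two creation or two annihilation operators vanish), so $\mathcal W(\hat C)$ counts the ''well'' full contractions. *)

From mathcomp Require Import all_boot.
Set Implicit Arguments. Unset Strict Implicit. Unset Printing Implicit Defensive.

Inductive elem := Cre of nat | Ann of nat.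

(* (De)excitation operators:  Exc a i = E^a_i = a^dag_a a_i ,
                               Dexc i a = D^i_a = a^dag_i a_a . *)
Inductive exop := Exc of nat & nat | Dexc of nat & nat.

Definition is_dexc (e : exop) : bool := if e is Dexc _ _ then true else false.
Definition is_exc (e : exop) : bool := ~~ is_dexc e.

Definition valid_exop (L Nocc : nat) (e : exop) : bool :=
  match e with
  | Exc a i => [&& 1 <= i, i <= Nocc, Nocc < a & a <= L]
  | Dexc i a => [&& 1 <= i, i <= Nocc, Nocc < a & a <= L]
  end.

Definition expand (e : exop) : seq elem :=
  match e with
  | Exc a i => [:: Cre a; Ann i]
  | Dexc i a => [:: Cre i; Ann a]
  end.

Definition chain_elems (C : seq exop) : seq elem := flatten (map expand C).

(* bracket word: deexcitation = "(" = true, excitation = ")" = false *)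
Definition bracket_word (C : seq exop) : seq bool := map is_dexc C.

Definition dyck (s : seq bool) : bool :=
  (count id s == count negb s) &&
  [forall k : 'I_(size s).+1, count negb (take k s) <= count id (take k s)].

Definition depth (s : seq bool) (k : nat) : nat :=
  count id (take k s) - count negb (take k s).

Definition opening_depths (s : seq bool) : seq nat :=
  [seq depth s k | k <- iota 1 (size s) & nth false s k.-1].

Section W.
Variables (Nocc : nat) (C : seq exop).
Local Notation m := (size (chain_elems C)).
Definition el (x : 'I_m) : elem := nth (Cre 0) (chain_elems C) x.

Definition is_occ_cre (e : elem) : bool := if e is Cre p then p <= Nocc else false.
Definition is_occ_ann (e : elem) : bool := if e is Ann p then p <= Nocc else false.
Definition is_vir_cre (e : elem) : bool := if e is Cre p then Nocc < p else false.
Definition is_vir_ann (e : elem) : bool := if e is Ann p then Nocc < p else false.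

Definition good_pair (x y : 'I_m) : bool :=
  (is_occ_cre (el x) && is_occ_ann (el y)) || (is_vir_ann (el x) && is_vir_cre (el y)).

Definition good_block (B : {set 'I_m}) : bool :=
  [exists x, exists y, [&& B == [set x; y], x < y & good_pair x y]].

Definition W : nat :=
  #|[set P : {set {set 'I_m}} | partition P [set: 'I_m] &&
                                [forall B in P, good_block B]]|.
End W.

From mathcomp Require Import all_boot zify.
Set Implicit Arguments. Unset Strict Implicit. Unset Printing Implicit Defensive.

(* Colour each elementary operator by whether its orbital is occupied, and call it an
   opener if it can only be the left member of a good pair (an occupied creation or a
   virtual annihilation).  Good pairs are then exactly the opener-closer pairs of equal
   colour with the opener on the left.  The rightmost opener v must be paired with one of
   the later closers of its colour, and removing such a pair does not change, for any
   earlier opener x, the number of later closers minus later openers of x's colour; so the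
   number of perfect matchings is the product of these differences over all openers.  In
   the chain, a deexcitation operator contributes two openers, one of each colour, and for
   both of them this difference is the depth reached right after it, whence the square. *)

Section PerfectMatchings.
Variables (m : nat) (pairable : rel 'I_m).

Definition pair_block (B : {set 'I_m}) : bool :=
  [exists x, exists y, [&& B == [set x; y], x < y & pairable x y]].

Definition perfect_matchings (S : {set 'I_m}) : {set {set {set 'I_m}}} :=
  [set P : {set {set 'I_m}} | partition P S && [forall B in P, pair_block B]].

Definition linked (v u : 'I_m) : bool :=
  ((v < u) && pairable v u) || ((u < v) && pairable u v).

Lemma linked_sym v u : linked v u = linked u v.
Proof. by rewrite /linked orbC. Qed.

Lemma linked_neq v u : linked v u -> v != u.
Proof. by case/orP=> /andP[lt _]; apply/eqP=> e; move: lt; rewrite e ltnn. Qed.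

Lemma pair_blockP B : reflect (exists x y, B = [set x; y] /\ linked x y) (pair_block B).
Proof.
apply: (iffP existsP) => [[x /existsP[y /and3P[/eqP-> lt p]]]|[x [y [-> /orP[]/andP[lt p]]]]].
- by exists x, y; rewrite /linked lt p.
- by exists x; apply/existsP; exists y; rewrite eqxx lt p.
- by exists y; apply/existsP; exists x; rewrite setUC eqxx lt p.
Qed.

Lemma sum_pair_blocks_at (S : {set 'I_m}) P v : P \in perfect_matchings S -> v \in S ->
  \sum_(u in S | linked v u) ([set v; u] \in P : nat) = 1.
Proof.
rewrite inE => /andP[partP /forallP blocksP] vS.
have vP : v \in cover P by rewrite (cover_partition partP).
have [B BP vB] := bigcupP vP.
have [u [defB vu]] : exists u, B = [set v; u] /\ linked v u.
  have /pair_blockP[x [y [defB xy]]] := implyP (blocksP B) BP.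
  move: vB; rewrite defB !inE => /orP[]/eqP->; first by exists y.
  by exists x; rewrite setUC linked_sym.
have uS : u \in S.
  by rewrite -(cover_partition partP); apply/bigcupP; exists B; rewrite // defB !inE eqxx orbT.
rewrite (bigD1 u) ?uS ?vu //= -defB BP big1 // => w /andP[/andP[_ vw] wu].
apply/eqP; rewrite eqb0; apply/negP=> B'P.
have [defB'|B'B] := eqVneq B [set v; w].
  have : w \in B by rewrite defB' !inE eqxx orbT.
  by rewrite defB !inE (negbTE wu) eq_sym (negbTE (linked_neq vw)).
have /disjointFr/(_ vB) := trivIsetP (partition_trivIset partP) _ _ BP B'P B'B.
by rewrite !inE eqxx.
Qed.

Lemma card_perfect_matchings_with_block (S : {set 'I_m}) v u : linked v u -> v \in S -> u \in S ->
  #|[set P in perfect_matchings S | [set v; u] \in P]| =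
  #|perfect_matchings (S :\: [set v; u])|.
Proof.
move=> vu vS uS; set B := [set v; u].
have BS : B \subset S by apply/subsetP=> x; rewrite !inE => /orP[]/eqP->.
have B_notin Q : Q \in perfect_matchings (S :\: B) -> B \notin Q.
  rewrite inE => /andP[partQ _]; apply/negP=> /(partitionS partQ)/subsetP/(_ v).
  by rewrite !inE eqxx => /(_ isT).
have -> : [set P in perfect_matchings S | B \in P] =
          (fun Q => B |: Q) @: perfect_matchings (S :\: B).
  apply/setP=> P; rewrite !inE; apply/idP/imsetP.
    case/andP=> /andP[partP /forallP blocksP] BP; exists (P :\ B); last by rewrite setD1K.
    rewrite inE partitionD1 //=; apply/forallP=> C; apply/implyP; rewrite !inE.
    by case/andP=> _; apply: (implyP (blocksP C)).
  case=> Q /[dup] QM; rewrite inE => /andP[partQ /forallP blocksQ] ->.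
  have defS : S = B :|: (S :\: B) by rewrite -{1}(setID S B) (setIidPr BS).
  rewrite !inE eqxx andbT {1}defS partitionU1 //=; last 2 first.
  - by apply/set0Pn; exists v; rewrite !inE eqxx.
  - by rewrite disjoint_sym disjoints_subset setDE subsetIr.
  apply/forallP=> C; apply/implyP; rewrite !inE => /orP[/eqP->|CQ].
    by apply/pair_blockP; exists v, u.
  exact: (implyP (blocksQ C)).
apply: card_in_imset => Q1 Q2 Q1M Q2M eqQ.
by rewrite -(setU1K (B_notin _ Q1M)) eqQ setU1K // B_notin.
Qed.

Lemma card_perfect_matchings_expand (S : {set 'I_m}) v : v \in S ->
  #|perfect_matchings S| = \sum_(u in S | linked v u) #|perfect_matchings (S :\: [set v; u])|.
Proof.
move=> vS; rewrite -sum1_card.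
transitivity (\sum_(P in perfect_matchings S) \sum_(u in S | linked v u) ([set v; u] \in P : nat)).
  by apply: eq_bigr => P PM; rewrite sum_pair_blocks_at.
rewrite exchange_big /=; apply: eq_bigr => u /andP[uS vu].
rewrite -card_perfect_matchings_with_block // -sum1_card big_mkcond [RHS]big_mkcond /=.
by apply: eq_bigr => P _; rewrite !inE; case: (_ && _); case: ([set v; u] \in P).
Qed.

Lemma card_perfect_matchings_set0 : #|perfect_matchings set0| = 1.
Proof.
rewrite -(cards1 (set0 : {set {set 'I_m}})); apply: eq_card => P.
rewrite !inE partition_set0; case: eqVneq => // ->.
by apply/forallP=> B; rewrite inE.
Qed.

End PerfectMatchings.

Lemma card_setD2 (T : finType) (S : {set T}) (P : pred T) v u :
  v \in S -> u \in S -> v != u ->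
  #|[set y in S :\: [set v; u] | P y]| + P v + P u = #|[set y in S | P y]|.
Proof.
move=> vS uS vu.
rewrite (cardsD1 v [set y in S | P y]) (cardsD1 u ([set y in S | P y] :\ v)).
rewrite !inE vS uS eq_sym vu /=.
have -> : [set y in S | P y] :\ v :\ u = [set y in S :\: [set v; u] | P y].
  by apply/setP=> y; rewrite !inE negb_or; case: (y == u); case: (y == v).
by rewrite [RHS]addnA [RHS]addnC addnA.
Qed.

Lemma card_setD2_lt (T : finType) (S : {set T}) v u : v \in S -> #|S :\: [set v; u]| < #|S|.
Proof.
move=> vS; apply/proper_card/properP.
by split; [exact: subsetDl | exists v; rewrite // !inE eqxx].
Qed.

Section ColouredMatchings.
Variables (m : nat) (K : eqType) (col : 'I_m -> K) (opener : pred 'I_m) (pairable : rel 'I_m).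
Hypothesis pairableE :
  forall x y, pairable x y = [&& opener x, ~~ opener y & col x == col y].

Definition later_closers (S : {set 'I_m}) (x : 'I_m) : nat :=
  #|[set y in S | [&& ~~ opener y, col y == col x & x < y]]|.

Definition later_openers (S : {set 'I_m}) (x : 'I_m) : nat :=
  #|[set y in S | [&& opener y, col y == col x & x < y]]|.

Definition matching_product (S : {set 'I_m}) : nat :=
  \prod_(x in S | opener x) (later_closers S x - later_openers S x).

Definition balanced (S : {set 'I_m}) : Prop :=
  forall k, #|[set y in S | opener y && (col y == k)]| =
            #|[set y in S | ~~ opener y && (col y == k)]|.

Lemma linked_opener v u : opener v ->
  linked pairable v u = [&& v < u, ~~ opener u & col u == col v].
Proof.
by move=> ov; rewrite /linked !pairableE ov /= !andbF orbF [col v == _]eq_sym.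
Qed.

Section RemovePair.
Variables (S : {set 'I_m}) (v u : 'I_m).
Hypotheses (vS : v \in S) (uS : u \in S) (ov : opener v) (vu : linked pairable v u).

Let vu_lt : v < u. Proof. by move: vu; rewrite linked_opener // => /and3P[]. Qed.
Let cu : ~~ opener u. Proof. by move: vu; rewrite linked_opener // => /and3P[]. Qed.
Let col_u : col u = col v. Proof. by move: vu; rewrite linked_opener // => /and3P[_ _ /eqP]. Qed.
Let v_neq_u : v != u. Proof. exact: linked_neq vu. Qed.

Lemma balanced_setD2 : balanced S -> balanced (S :\: [set v; u]).
Proof.
move=> balS k; apply/eqP; rewrite -(eqn_add2r (col v == k)); apply/eqP.
have := card_setD2 (fun y => opener y && (col y == k)) vS uS v_neq_u.
have := card_setD2 (fun y => ~~ opener y && (col y == k)) vS uS v_neq_u.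
rewrite /= ov (negbTE cu) col_u /= !addn0 => -> ->.
by rewrite balS.
Qed.

Lemma later_choices_setD2 (x : 'I_m) : x < v ->
  later_closers (S :\: [set v; u]) x - later_openers (S :\: [set v; u]) x =
  later_closers S x - later_openers S x.
Proof.
move=> xv; have xu := ltn_trans xv vu_lt.
rewrite /later_closers /later_openers.
rewrite -(card_setD2 (fun y => [&& ~~ opener y, col y == col x & x < y]) vS uS v_neq_u).
rewrite -(card_setD2 (fun y => [&& opener y, col y == col x & x < y]) vS uS v_neq_u).
by rewrite /= ov (negbTE cu) col_u xv xu /= !andbT !addn0 subnDr.
Qed.

Lemma matching_product_setD2 : (forall x, x \in S -> opener x -> x <= v) ->
  matching_product (S :\: [set v; u]) =
  \prod_(x | (x \in S) && opener x && (x != v)) (later_closers S x - later_openers S x).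
Proof.
move=> vmax; rewrite /matching_product; apply: eq_big => [x|x].
  rewrite !inE negb_or; have [->|xu] := eqVneq x u; first by rewrite (negbTE cu) !andbF.
  by case: (x != v); rewrite /= ?andbT ?andbF.
rewrite !inE negb_or => /andP[/andP[/andP[xv _] xS] ox].
by rewrite later_choices_setD2 // ltn_neqAle xv vmax.
Qed.

End RemovePair.

Lemma later_choices_rightmost (S : {set 'I_m}) v : opener v ->
  (forall x, x \in S -> opener x -> x <= v) ->
  later_closers S v - later_openers S v = #|[set u in S | linked pairable v u]|.
Proof.
move=> ov vmax; rewrite /later_openers (_ : [set y in S | _] = set0) ?cards0 ?subn0.
  apply: eq_card => u; rewrite !inE linked_opener //.
  by case: (v < u); rewrite /= ?andbT ?andbF.
apply/setP=> y; rewrite !inE; apply/negP=> /and4P[yS oy _ vy].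
by move: (vmax y yS oy); rewrite leqNgt vy.
Qed.

Lemma balanced_no_opener (S : {set 'I_m}) :
  balanced S -> (forall x, x \in S -> ~~ opener x) -> S = set0.
Proof.
move=> balS noS; apply/setP=> y; rewrite inE; apply/negP=> yS.
have : 0 < #|[set z in S | ~~ opener z && (col z == col y)]|.
  by apply/card_gt0P; exists y; rewrite !inE yS noS ?eqxx.
rewrite -balS; apply/negP; rewrite -leqNgt leqn0 cards_eq0; apply/eqP/setP=> z.
by rewrite !inE; case zS: (z \in S); rewrite //= (negbTE (noS _ zS)).
Qed.

Theorem card_perfect_matchings_balanced (S : {set 'I_m}) : balanced S ->
  #|perfect_matchings pairable S| = matching_product S.
Proof.
have [n ltSn] := ubnP #|S|; elim: n S ltSn => // n IH S ltSn balS.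
case: (pickP [pred x in S | opener x]) => [x0 x0S | noS]; last first.
  rewrite (balanced_no_opener balS) => [|x xS]; last by move: (noS x); rewrite /= xS => /negbT.
  by rewrite card_perfect_matchings_set0 /matching_product big_pred0 // => x; rewrite inE.
case: (arg_maxnP (fun x : 'I_m => val x) x0S) => v /andP[vS ov] vmax.
have {}vmax x : x \in S -> opener x -> x <= v by move=> xS ox; apply: vmax; rewrite /= xS.
rewrite (card_perfect_matchings_expand pairable vS) /matching_product [RHS](bigD1 v) ?vS //=.
set R := \prod_(x | _) _.
transitivity (\sum_(u in [set u in S | linked pairable v u]) R).
  apply: eq_big => [u|u /andP[uS vu]]; first by rewrite inE.
  rewrite IH ?matching_product_setD2 //; last exact: balanced_setD2.
  exact: leq_trans (card_setD2_lt u vS) ltSn.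
by rewrite big_const iter_addn_0 mulnC later_choices_rightmost.
Qed.

End ColouredMatchings.

Lemma card_setT_ord m (p : nat -> bool) :
  #|[set y in [set: 'I_m] | p y]| = \sum_(0 <= y < m) p y.
Proof.
rewrite -sum1_card big_mkcond big_mkord /=; apply: eq_bigr => y _.
by rewrite !inE; case: (p y).
Qed.

Lemma big_nat_double (R : Type) (idx : R) (op : Monoid.law idx) k (F : nat -> R) :
  \big[op/idx]_(0 <= x < k.*2) F x = \big[op/idx]_(0 <= r < k) op (F r.*2) (F r.*2.+1).
Proof.
elim: k => [|k IH]; first by rewrite !big_geq.
by rewrite doubleS !big_nat_recr //= IH Monoid.mulmA.
Qed.

Lemma count_drop_nth (T : Type) (x0 : T) (P : pred T) (s : seq T) j :
  count P (drop j s) = \sum_(0 <= r < size s) ((j <= r) && P (nth x0 s r)).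
Proof.
elim: s j => [|x s IH] j /=; first by rewrite big_geq.
rewrite big_nat_recl //; case: j => [|j] /=.
  by have := IH 0; rewrite drop0 => ->.
by rewrite IH add0n; apply: eq_bigr => r _; rewrite ltnS.
Qed.

Section DoubledWord.
Variable s : seq bool.

(* Positions 2q and 2q+1 come from letter q: a deexcitation D^i_a = a^+_i a_a yields an
   occupied then a virtual opener, an excitation E^a_i = a^+_a a_i a virtual then an
   occupied closer. *)
Definition opener_at (y : nat) : bool := nth false s y./2.
Definition colour_at (y : nat) : bool := opener_at y (+) odd y.

Lemma sum_openers_of_colour k :
  \sum_(0 <= y < (size s).*2) (opener_at y && (colour_at y == k)) = count id s.
Proof.
rewrite -[s in count _ s]drop0 (count_drop_nth false) big_nat_double.
apply: eq_big_nat => r _; rewrite /colour_at /opener_at /= half_double uphalf_double odd_double.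
by case: (nth false s r); case: k.
Qed.

Lemma sum_closers_of_colour k :
  \sum_(0 <= y < (size s).*2) (~~ opener_at y && (colour_at y == k)) = count negb s.
Proof.
rewrite -[s in count _ s]drop0 (count_drop_nth false) big_nat_double.
apply: eq_big_nat => r _; rewrite /colour_at /opener_at /= half_double uphalf_double odd_double.
by case: (nth false s r); case: k.
Qed.

Lemma sum_later_closers x : opener_at x ->
  \sum_(0 <= y < (size s).*2) [&& ~~ opener_at y, colour_at y == colour_at x & x < y] =
  count negb (drop x./2.+1 s).
Proof.
move=> ox; rewrite (count_drop_nth false) big_nat_double; apply: eq_big_nat => r _.
have defx := odd_double_half x.
rewrite /colour_at ox /opener_at /= half_double uphalf_double odd_double.
have [sr|sr] := boolP (nth false s r); first by rewrite !andbF.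
have rq : r != x./2 by apply: contraNneq sr => ->.
by case: (odd x) defx => /= defx; rewrite ?addn0 ?add0n andbT; lia.
Qed.

Lemma sum_later_openers x : opener_at x ->
  \sum_(0 <= y < (size s).*2) [&& opener_at y, colour_at y == colour_at x & x < y] =
  count id (drop x./2.+1 s).
Proof.
move=> ox; rewrite (count_drop_nth false) big_nat_double; apply: eq_big_nat => r _.
have defx := odd_double_half x.
rewrite /colour_at ox /opener_at /= half_double uphalf_double odd_double.
case: (nth false s r); last by rewrite !andbF.
by case: (odd x) defx => /= defx; rewrite ?addn0 ?add0n andbT; lia.
Qed.

Variable m : nat.
Hypothesis size_m : m = (size s).*2.

Lemma balanced_doubled : count id s = count negb s ->
  balanced (fun y : 'I_m => colour_at y) (fun y : 'I_m => opener_at y) setT.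
Proof.
move=> bal k; rewrite (card_setT_ord m (fun y => opener_at y && (colour_at y == k))).
rewrite (card_setT_ord m (fun y => ~~ opener_at y && (colour_at y == k))).
by rewrite size_m sum_openers_of_colour sum_closers_of_colour.
Qed.

Lemma matching_product_doubled :
  matching_product (fun y : 'I_m => colour_at y) (fun y : 'I_m => opener_at y) setT =
  (\prod_(0 <= q < size s | nth false s q)
     (count negb (drop q.+1 s) - count id (drop q.+1 s))) ^ 2.
Proof.
transitivity (\prod_(0 <= x < m | opener_at x)
                (count negb (drop x./2.+1 s) - count id (drop x./2.+1 s))).
  rewrite big_mkord; apply: eq_big => [x|x ox]; first by rewrite inE.
  rewrite /later_closers /later_openers.
  rewrite (card_setT_ord m (fun y => [&& ~~ opener_at y, colour_at y == colour_at x & x < y])).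
  rewrite (card_setT_ord m (fun y => [&& opener_at y, colour_at y == colour_at x & x < y])).
  rewrite inE /= in ox; move: (nat_of_ord x) ox => {}x ox.
  by rewrite size_m sum_later_closers // sum_later_openers.
rewrite size_m -mulnn -big_split big_mkcond [RHS]big_mkcond big_nat_double /=.
apply: eq_big_nat => q _; rewrite /opener_at /= half_double uphalf_double.
by case: (nth false s q).
Qed.

End DoubledWord.

Lemma depth_drop s k : count id s = count negb s ->
  depth s k = count negb (drop k s) - count id (drop k s).
Proof.
move=> bal; rewrite /depth.
have := count_cat id (take k s) (drop k s); have := count_cat negb (take k s) (drop k s).
rewrite cat_take_drop; lia.
Qed.

Lemma prod_opening_depths s : count id s = count negb s ->
  \prod_(d <- opening_depths s) d =
  \prod_(0 <= q < size s | nth false s q) (count negb (drop q.+1 s) - count id (drop q.+1 s)).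
Proof.
move=> bal; rewrite /opening_depths big_map big_filter (iotaDl 1 0) big_map.
by rewrite /index_iota subn0; apply: eq_big => q; rewrite ?add1n ?depth_drop.
Qed.

Lemma size_chain_elems C : size (chain_elems C) = (size C).*2.
Proof. by elim: C => //= e C IH; rewrite /chain_elems /= size_cat IH; case: e. Qed.

Lemma nth_chain_elems C x : x < (size C).*2 ->
  nth (Cre 0) (chain_elems C) x = nth (Cre 0) (expand (nth (Exc 0 0) C x./2)) (odd x).
Proof.
elim: C x => [|e C IH] [|[|x]] //=; rewrite /chain_elems /=; try by case: e.
rewrite doubleS ltnS ltnS negbK => xlt; rewrite -IH //; by case: e.
Qed.

Definition opens (Nocc : nat) (e : elem) : bool :=
  match e with Cre p => p <= Nocc | Ann p => Nocc < p end.

Definition occupied (Nocc : nat) (e : elem) : bool :=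
  match e with (Cre p | Ann p) => p <= Nocc end.

Lemma good_pairE Nocc C (x y : 'I_(size (chain_elems C))) : good_pair Nocc x y =
  [&& opens Nocc (el x), ~~ opens Nocc (el y) & occupied Nocc (el x) == occupied Nocc (el y)].
Proof.
rewrite /good_pair; case: (el x) => p; case: (el y) => q /=;
  by case: (leqP p Nocc); case: (leqP q Nocc).
Qed.

Lemma opens_occupied_expand L Nocc e (b : bool) : valid_exop L Nocc e ->
  opens Nocc (nth (Cre 0) (expand e) b) = is_dexc e /\
  occupied Nocc (nth (Cre 0) (expand e) b) = is_dexc e (+) b.
Proof.
by case: e => p q /and4P[*]; case: b; split => /=; lia.
Qed.

Section Chain.
Variables (L Nocc : nat) (C : seq exop).
Hypothesis validC : all (valid_exop L Nocc) C.
Local Notation s := (bracket_word C).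

Lemma opens_occupied_el (x : 'I_(size (chain_elems C))) :
  opens Nocc (el x) = opener_at s x /\ occupied Nocc (el x) = colour_at s x.
Proof.
have xlt : x < (size C).*2 by rewrite -size_chain_elems.
have qlt : x./2 < size C by have := odd_double_half x; lia.
rewrite /el nth_chain_elems // /colour_at /opener_at /bracket_word (nth_map (Exc 0 0)) //.
exact: opens_occupied_expand (all_nthP _ validC _ qlt).
Qed.

Lemma good_pair_doubled (x y : 'I_(size (chain_elems C))) :
  good_pair Nocc x y = [&& opener_at s x, ~~ opener_at s y & colour_at s x == colour_at s y].
Proof.
by rewrite good_pairE; case: (opens_occupied_el x) => -> ->; case: (opens_occupied_el y) => -> ->.
Qed.

End Chain.

Theorem mainTheorem4 (L Nocc n : nat) (C : seq exop) :
  1 <= Nocc -> Nocc < L -> 1 <= n ->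
  all (valid_exop L Nocc) C ->
  count is_exc C = n -> count is_dexc C = n ->
  dyck (bracket_word C) ->
  W Nocc C = (\prod_(d <- opening_depths (bracket_word C)) d) ^ 2.
Proof.
move=> _ _ _ validC _ _ /andP[/eqP balC _].
have sizeC : size (chain_elems C) = (size (bracket_word C)).*2.
  by rewrite size_map size_chain_elems.
rewrite prod_opening_depths // -(matching_product_doubled sizeC).
apply: card_perfect_matchings_balanced; first exact: good_pair_doubled validC.
exact: balanced_doubled sizeC balC.
Qed.
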